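(* In the setting below, for all distinct $i,j,k\in\mathbb Z/N\mathbb Z$ we have $\#(P_{ij}\cap Q^+_{jk})\leq2$.
   Context: Setting: $p,q$ distinct primes, $N=p+q$; $M=(m_{ik})_{i,k\in\mathbb Z/N\mathbb Z}$ has entries in $\mathbb Z/pq\mathbb Z$ and $(e^{2\pi i\,m_{ik}/pq})$ is a complex Hadamard matrix (unimodular entries, orthogonal rows). $L_i(k)=m_{ik}$, $L_{ij}=L_j-L_i$. For $d\mid pq$, $d(\mathbb Z/pq\mathbb Z)$ is the subgroup of multiples of $d$. For distinct $i,j$ there is a partition $\mathbb Z/N\mathbb Z=P_{ij}\sqcup Q_{ij}\sqcup R_{ij}$ and $r\in\mathbb Z/pq\mathbb Z$ with: $\#R_{ij}=2$ and $L_{ij}\equiv r$ on $R_{ij}$; $\#P_{ij}=p-1$ and $L_{ij}(P_{ij})=(r+q(\mathbb Z/pq\mathbb Z))\setminus\{r\}$; $\#Q_{ij}=q-1$ and $L_{ij}(Q_{ij})=(r+p(\mathbb Z/pq\mathbb Z))\setminus\{r\}$. This partition is unique ($R_{ij}$ is the pair of indices where $L_{ij}$ takes its unique repeated value). Put $P^+_{ij}=P_{ij}\cup R_{ij}$, $Q^+_{ij}=Q_{ij}\cup R_{ij}$. *)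

From HB Require Import structures.
From mathcomp Require Import all_boot all_order all_algebra all_field.
Set Implicit Arguments. Unset Strict Implicit. Unset Printing Implicit Defensive.
Import Order.TTheory GRing.Theory Num.Theory.
Local Open Scope ring_scope.

(* The matrix M has rows/columns indexed by Z/NZ (represented as 'I_N; only the
   index set matters) and entries in Z/nZ (n = pq). *)

Definition Lij (n N : nat) (M : 'M['Z_n]_N) (i j : 'I_N) (k : 'I_N) : 'Z_n :=
  M j k - M i k.

Definition mulsub (n d : nat) : {set 'Z_n} :=
  [set (d%:R * y : 'Z_n) | y in [set: 'Z_n]].

Definition coset_of_mul (n d : nat) (r : 'Z_n) : {set 'Z_n} :=
  [set r + y | y in mulsub n d].

(* (e^{2 pi i m_ik / pq}) is a complex Hadamard matrix: unimodular entries
   (automatic for roots of unity) and pairwise orthogonal rows.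
   Here w plays the role of e^{2 pi i / pq}. *)
Definition hadamard_exp (n N : nat) (w : algC) (M : 'M['Z_n]_N) : Prop :=
  forall i j : 'I_N, i != j ->
    \sum_(k < N) w ^+ (M i k : nat) * (w ^+ (M j k : nat))^* = 0.

Definition PQR_partition (p q : nat) (M : 'M['Z_(p * q)]_(p + q))
    (i j : 'I_(p + q)) (P Q R : {set 'I_(p + q)}) (r : 'Z_(p * q)) : Prop :=
  [/\ [/\ [disjoint P & Q], [disjoint P & R], [disjoint Q & R]
        & P :|: Q :|: R = [set: 'I_(p + q)]],
      #|R| = 2%N /\ {in R, forall k, Lij M i j k = r},
      #|P| = p.-1 /\ [set Lij M i j k | k in P] = coset_of_mul q r :\ r
    & #|Q| = q.-1 /\ [set Lij M i j k | k in Q] = coset_of_mul p r :\ r].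

From HB Require Import structures.
From mathcomp Require Import all_boot all_order all_algebra all_field.
From mathcomp Require Import ring zify.
Set Implicit Arguments. Unset Strict Implicit. Unset Printing Implicit Defensive.
Import Order.TTheory GRing.Theory Num.Theory.
Local Open Scope ring_scope.

(* Write Z = Z/pqZ = A_p (+) A_q, where A_d = ann d is the subgroup killed by d
   (A_p = q Z has order p, A_q = p Z has order q).  Say that L : I -> Z has the
   coset profile of r when each value m is taken [m - r \in A_p] + [m - r \in A_q]
   times, i.e. L hits r twice and every other point of (r + A_p) u (r + A_q) once.
   - A PQR partition of L_ij (with value r_ij) says exactly that L_ij has the
     coset profile of r_ij.
   - Orthogonality of rows i and k says that the p+q roots of unity w^(L_ik x)
     sum to 0; Galois conjugation and a discrete Fourier argument show that
     such a vanishing sum always has a coset profile, for some r_ik.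
   - Summing the three profiles (L_ik = L_ij + L_jk) gives e = r_ik - r_ij - r_jk
     \in A_q when p is odd; then every x \in P_ij :&: Q+_jk has L_jk x = r_jk + e,
     and the profile of L_jk takes that value at most twice.  For p = 2, P_ij has
     a single element. *)

Definition ann (n d : nat) : {set 'Z_n} := [set x | d%:R * x == 0].

Section Annihilator.
Variables n d : nat.

Lemma ann0 : 0 \in ann n d.
Proof. by rewrite inE mulr0. Qed.

Lemma annD (x y : 'Z_n) : x \in ann n d -> y \in ann n d -> x + y \in ann n d.
Proof. by rewrite !inE mulrDr => /eqP -> /eqP ->; rewrite addr0. Qed.

Lemma annN (x : 'Z_n) : x \in ann n d -> - x \in ann n d.
Proof. by rewrite !inE mulrN oppr_eq0. Qed.

Lemma annB (x y : 'Z_n) : x \in ann n d -> y \in ann n d -> x - y \in ann n d.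
Proof. by move=> hx /annN; apply: annD. Qed.

End Annihilator.

Section CoprimeFactor.
Variables p q n : nat.
Hypotheses (p_gt1 : (1 < p)%N) (q_gt1 : (1 < q)%N) (cop_pq : coprime p q).
Hypothesis npq : n = (p * q)%N.

Lemma n_gt1 : (1 < n)%N.
Proof. by rewrite npq (leq_trans _ (leq_mul p_gt1 q_gt1)). Qed.

Lemma pq_eq0 : (p%:R * q%:R : 'Z_n) = 0.
Proof. by rewrite -natrM -npq pchar_Zp // n_gt1. Qed.

Lemma bezout_pq : exists a b : 'Z_n, a * p%:R + b * q%:R = 1.
Proof.
have [a _] := Bezoutl q (ltnW p_gt1); rewrite (eqP cop_pq) => /dvdnP [b hb].
exists b%:R, (- a%:R); apply/eqP.
by rewrite mulNr subr_eq -!natrM -hb natrD.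
Qed.

Lemma mulsub_ann : mulsub n q = ann n p.
Proof.
apply/setP => x; apply/imsetP/idP => [[y _ ->]|].
  by rewrite inE mulrA pq_eq0 mul0r.
rewrite inE => /eqP px0; have [a [b hab]] := bezout_pq.
exists (b * x); rewrite ?inE //.
transitivity ((a * p%:R + b * q%:R) * x); first by rewrite hab mul1r.
by rewrite mulrDl -mulrA px0 mulr0 add0r mulrCA mulrA.
Qed.

(* A_p = q Z is the image of {0, ..., p-1} under k |-> q k. *)
Lemma card_ann_le : (#|ann n p| <= p)%N.
Proof.
rewrite -mulsub_ann -[X in (_ <= X)%N]card_ord.
apply: leq_trans (leq_imset_card (fun k : 'I_p => q%:R * (val k)%:R : 'Z_n) _).
apply/subset_leq_card/subsetP => _ /imsetP [y _ ->].
have -> : y = (y %/ p * p + y %% p)%N%:R by rewrite -divn_eq natr_Zp.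
apply/imsetP; exists (Ordinal (ltn_pmod y (ltnW p_gt1))) => //=.
by rewrite natrD mulrDr natrM mulrCA [q%:R * p%:R]mulrC pq_eq0 mulr0 add0r.
Qed.

End CoprimeFactor.

Section CoprimeSplitting.
Variables p q n : nat.
Hypotheses (p_gt1 : (1 < p)%N) (q_gt1 : (1 < q)%N) (cop_pq : coprime p q).
Hypothesis npq : n = (p * q)%N.

Let cop_qp : coprime q p. Proof. by rewrite coprime_sym. Qed.
Let nqp : n = (q * p)%N. Proof. by rewrite mulnC. Qed.

Lemma ann_cap (x : 'Z_n) : x \in ann n p -> x \in ann n q -> x = 0.
Proof.
rewrite !inE => /eqP px0 /eqP qx0; have [a [b hab]] := @bezout_pq p q n p_gt1 cop_pq.
by rewrite -[x]mul1r -hab mulrDl -!mulrA px0 qx0 !mulr0 addr0.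
Qed.

Lemma ann_decomp (m : 'Z_n) :
  exists u v, [/\ u \in ann n p, v \in ann n q & m = u + v].
Proof.
have [a [b hab]] := @bezout_pq p q n p_gt1 cop_pq.
have pq0 := @pq_eq0 p q n p_gt1 q_gt1 npq.
exists (m * (b * q%:R)), (m * (a * p%:R)); split.
- rewrite inE; have -> : p%:R * (m * (b * q%:R)) = m * b * (p%:R * q%:R) by ring.
  by rewrite pq0 mulr0.
- rewrite inE; have -> : q%:R * (m * (a * p%:R)) = m * a * (p%:R * q%:R) by ring.
  by rewrite pq0 mulr0.
- by rewrite -mulrDr addrC hab mulr1.
Qed.

Lemma sum_over_ann (F : 'Z_n -> nat) :
  (\sum_(m : 'Z_n) F m = \sum_(u in ann n p) \sum_(v in ann n q) F (u + v)%R)%N.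
Proof.
have inj : {in setX (ann n p) (ann n q) &, injective (fun uv => uv.1 + uv.2)}.
  move=> [u v] [u' v'] /setXP [hu hv] /setXP [hu' hv'] /= e.
  have duq : u - u' \in ann n q.
    by rewrite (_ : u - u' = v' - v) ?annB // -[u](addrK v) e; ring.
  have /eqP := ann_cap (annB hu hu') duq; rewrite subr_eq0 => /eqP eu.
  by move: e; rewrite eu => /addrI ->.
have onto : [set uv.1 + uv.2 | uv in setX (ann n p) (ann n q)] = [set: 'Z_n].
  apply/setP => m; rewrite inE; have [u [v [hu hv ->]]] := ann_decomp m.
  by apply/imsetP; exists (u, v) => //; rewrite inE hu hv.
rewrite pair_big_dep /= (eq_bigl (mem (setX (ann n p) (ann n q)))); last first.
  by move=> x; rewrite !inE.
rewrite -(big_imset (fun m => F m) inj) onto.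
by apply: eq_bigl => m; rewrite inE.
Qed.

(* |A_p| |A_q| = pq together with |A_p| <= p and |A_q| <= q. *)
Lemma card_ann : #|ann n p| = p.
Proof.
have prod : (#|ann n p| * #|ann n q| = p * q)%N.
  have := sum_over_ann (fun _ => 1%N).
  rewrite !sum1_card sum_nat_const mulnC => <-.
  by rewrite card_ord Zp_cast -?npq // (@n_gt1 p q n p_gt1 q_gt1 npq).
have := @card_ann_le p q n p_gt1 q_gt1 cop_pq npq.
have := @card_ann_le q p n q_gt1 p_gt1 cop_qp nqp.
by move: prod; nia.
Qed.

End CoprimeSplitting.

(* Galois invariance: if a sum of powers of a primitive n-th root of unity
   vanishes, it still vanishes after replacing the root by any other primitive
   n-th root z^k; indeed z^k is a root of the minimal polynomial of z. *)
Lemma galois_vanishing_sum (n : nat) (z : algC) (hz : n.-primitive_root z)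
    (I : finType) (e : I -> nat) :
  \sum_i z ^+ e i = 0 -> forall k, coprime k n -> \sum_i (z ^+ k) ^+ e i = 0.
Proof.
move=> sum0 k cop_kn.
pose P : {poly rat} := \sum_i 'X^(e i).
have evalP (x : algC) : (map_poly ratr P).[x] = \sum_i x ^+ e i.
  rewrite /P rmorph_sum horner_sum; apply: eq_bigr => i _.
  by rewrite /= map_polyXn hornerXn.
have [p0 [min_p0 _] root_p0] := minCpolyP z.
have /dvdpP [g P_eq] : p0 %| P by rewrite -root_p0 /root evalP sum0.
have zk_root : root (minCpoly z) (z ^+ k).
  by rewrite (minCpoly_cyclotomic hz) (root_cyclotomic hz) prim_root_exp_coprime.
by rewrite -evalP P_eq rmorphM /= -min_p0 hornerM (eqP zk_root) mulr0.
Qed.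

Definition expw (w : algC) (n : nat) (v : 'Z_n) : algC := w ^+ v.

Section RootsOfUnity.
Variables (n : nat) (w : algC).
Hypotheses (n_gt1 : (1 < n)%N) (hw : n.-primitive_root w).

Let Zn_cast : (Zp_trunc n).+2 = n. Proof. exact: Zp_cast. Qed.

Lemma expw_nat k : expw w (k%:R : 'Z_n) = w ^+ k.
Proof. by rewrite /expw val_Zp_nat // (prim_expr_mod hw). Qed.

Lemma expw_add (u v : 'Z_n) : expw w (u + v) = expw w u * expw w v.
Proof. by rewrite -[u]natr_Zp -[v]natr_Zp -natrD !expw_nat exprD. Qed.

Lemma expw_mulnat k (v : 'Z_n) : expw w (k%:R * v) = expw w v ^+ k.
Proof. by rewrite -[v]natr_Zp -natrM !expw_nat -exprM mulnC. Qed.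

Lemma expw0 : expw w (0 : 'Z_n) = 1.
Proof. by rewrite /expw expr0. Qed.

Lemma expw_eq1 (v : 'Z_n) : (expw w v == 1) = (v == 0).
Proof.
apply/idP/eqP => [|->]; last by rewrite expw0.
rewrite /expw -(expr0 w) (eq_prim_root_expr hw) mod0n modn_small.
  by move=> /eqP v0; apply/val_inj.
by rewrite -[X in (_ < X)%N]Zn_cast.
Qed.

Lemma expw_orthogonality (v : 'Z_n) :
  \sum_(t : 'Z_n) expw w (t * v) = if v == 0 then n%:R else 0.
Proof.
under eq_bigr do rewrite -[X in X * v]natr_Zp expw_mulnat.
case: eqP => [->|/eqP v_neq0].
  by rewrite expw0; under eq_bigr do rewrite expr1n; rewrite sumr_const card_ord Zn_cast.
have : (expw w v - 1) * \sum_(i < (Zp_trunc n).+2) expw w v ^+ i = 0.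
  by rewrite -subrX1 -expw_mulnat Zn_cast pchar_Zp // mul0r expw0 subrr.
by move/eqP; rewrite mulf_eq0 subr_eq0 expw_eq1 (negPf v_neq0) => /eqP.
Qed.

Lemma expw_conj (a b : 'Z_n) : w ^+ a * (w ^+ b)^* = expw w (a - b).
Proof.
have norm_w : `|w| = 1.
  have /eqP := congr1 Num.norm (prim_expr_order hw).
  by rewrite normrX normr1 pexpr_eq1 ?normr_ge0 ?(prim_order_gt0 hw) // => /eqP.
have unit_b : w ^+ b * (w ^+ b)^* = 1 by rewrite -normCK normrX norm_w !expr1n.
rewrite -[a in LHS](subrK b) -/(expw w _) [expw w (_ + b)]expw_add.
by rewrite /expw -mulrA unit_b mulr1.
Qed.

End RootsOfUnity.

Lemma sum_nat_eq1 (T : finType) (A : {pred T}) (f : T -> nat) :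
  (\sum_(x in A) f x = 1)%N ->
  exists2 x0, x0 \in A & f x0 = 1%N /\ {in A, forall x, x != x0 -> f x = 0%N}.
Proof.
move=> sum1; have [x0 /andP [x0A fx0_gt0] | all0] := pickP [pred x in A | 0 < f x]%N.
  move: sum1; rewrite (bigD1 x0) //= => sum1.
  have rest0 : (\sum_(i in A | i != x0) f i == 0)%N by apply/eqP; lia.
  exists x0 => //; split; first lia.
  move=> x xA x_neq; move: rest0; rewrite sum_nat_eq0 => /forallP /(_ x).
  by rewrite xA x_neq => /eqP.
suff : (\sum_(x in A) f x == 0)%N by rewrite sum1.
rewrite sum_nat_eq0; apply/forallP => x; apply/implyP => xA.
by have := all0 x; rewrite /= xA lt0n => /negbFE.
Qed.

Lemma coprime_combination_eq (p q h g : nat) :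
  (1 < p)%N -> (1 < q)%N -> coprime p q -> (q * h + p * g = p + q)%N ->
  h = 1%N /\ g = 1%N.
Proof.
move=> p_gt1 q_gt1 cop_pq e.
have not_dvd (a b : nat) : coprime a b -> (1 < a)%N -> ~~ (a %| b)%N.
  move=> cop_ab a_gt1; apply/negP => /gcdn_idPl.
  by move: cop_ab; rewrite /coprime => /eqP -> a1; rewrite -a1 in a_gt1.
case: h e => [|h] e.
  have : (p %| q)%N by rewrite -(dvdn_addr q (dvdnn p)) -e muln0 add0n dvdn_mulr.
  by rewrite (negPf (not_dvd p q cop_pq p_gt1)).
case: g e => [|g] e.
  have : (q %| p)%N by rewrite -(dvdn_addl p (dvdnn q)) -e muln0 addn0 dvdn_mulr.
  by rewrite (negPf (not_dvd q p _ q_gt1)) // coprime_sym.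
split; nia.
Qed.

Lemma mem_translate (n : nat) (S : {set 'Z_n}) (r x : 'Z_n) :
  (x \in [set r + y | y in S]) = (x - r \in S).
Proof.
apply/imsetP/idP => [[y y_S ->]|x_S]; first by rewrite addrC addKr.
by exists (x - r) => //; rewrite addrC subrK.
Qed.

Lemma card_translate (n : nat) (S : {set 'Z_n}) (r : 'Z_n) :
  #|[set r + y | y in S]| = #|S|.
Proof. by rewrite card_imset //; apply: addrI. Qed.

Lemma card_split3 (T : finType) (F P Q R : {set T}) :
  [disjoint P & Q] -> [disjoint P & R] -> [disjoint Q & R] ->
  P :|: Q :|: R = [set: T] ->
  #|F| = (#|F :&: P| + #|F :&: Q| + #|F :&: R|)%N.
Proof.
move=> dPQ dPR dQR cover.
have meet0 (A B : {set T}) : [disjoint A & B] -> (F :&: A) :&: (F :&: B) = set0.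
  by move=> /disjoint_setI0 AB0; rewrite setIACA setIid AB0 setI0.
rewrite -{1}(setIT F) -cover !setIUr cardsU setIUl cardsU.
by rewrite !meet0 // setU0 cards0 !subn0.
Qed.

Lemma card_fiber_inj (T U : finType) (A : {set T}) (f : T -> U) (m : U) :
  {in A &, injective f} -> #|[set x | f x == m] :&: A| = (m \in f @: A).
Proof.
move=> f_inj; have [/imsetP [x0 x0A ->]|m_notin] := boolP (m \in f @: A).
  suff -> : [set x | f x == f x0] :&: A = [set x0] by rewrite cards1.
  apply/setP => x; rewrite !inE.
  apply/andP/eqP => [[/eqP fx xA]|->]; [exact: f_inj | by rewrite eqxx].
apply/eqP; rewrite /= cards_eq0; apply/eqP/setP => x; rewrite !inE.
by apply/andP => -[/eqP fx xA]; rewrite -fx imset_f in m_notin.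
Qed.

Definition valcount (I : finType) (n : nat) (D : I -> 'Z_n) (m : 'Z_n) : nat :=
  #|[set x | D x == m]|.

Lemma sum_by_valcount (I : finType) (n : nat) (V : nmodType) (L : I -> 'Z_n)
    (f : 'Z_n -> V) :
  \sum_x f (L x) = \sum_m f m *+ valcount L m.
Proof.
transitivity (\sum_x \sum_m f m *+ (L x == m)).
  apply: eq_bigr => x _; rewrite (bigD1 (L x)) //= eqxx mulr1n big1 ?addr0 //.
  by move=> m; rewrite eq_sym => /negPf ->.
rewrite exchange_big /=; apply: eq_bigr => m _; rewrite sumrMnr /valcount.
rewrite -sum1_card [in RHS]big_mkcond /=; congr (_ *+ _).
by apply: eq_bigr => x _; rewrite inE.
Qed.

Definition coset_profile (p q : nat) (I : finType) (L : I -> 'Z_(p * q))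
    (r : 'Z_(p * q)) : Prop :=
  forall m, valcount L m =
    (((m - r)%R \in ann (p * q) p) + ((m - r)%R \in ann (p * q) q))%N.

Section DistinctPrimes.
Variables (p q : nat).
Hypotheses (pr_p : prime p) (pr_q : prime q) (neq_pq : p != q).
Notation Z := 'Z_(p * q).
Notation Ap := (ann (p * q) p).
Notation Aq := (ann (p * q) q).

Let p_gt1 : (1 < p)%N. Proof. exact: prime_gt1. Qed.
Let q_gt1 : (1 < q)%N. Proof. exact: prime_gt1. Qed.
Let cop_pq : coprime p q. Proof. by rewrite prime_coprime // dvdn_prime2. Qed.
Let cop_qp : coprime q p. Proof. by rewrite coprime_sym. Qed.
Let pq_gt1 : (1 < p * q)%N. Proof. exact: n_gt1 p_gt1 q_gt1 (erefl _). Qed.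
Let card_Z : #|{: Z}| = (p * q)%N. Proof. by rewrite card_ord Zp_cast. Qed.
Let qp_eq : (p * q = q * p)%N. Proof. exact: mulnC. Qed.

Let Ap_Aq_cap := @ann_cap p q (p * q) p_gt1 cop_pq.
Let Ap_Aq_decomp := @ann_decomp p q _ p_gt1 q_gt1 cop_pq (erefl _).
Let card_Ap := @card_ann p q _ p_gt1 q_gt1 cop_pq (erefl _).
Let card_Aq := @card_ann q p _ q_gt1 p_gt1 cop_qp qp_eq.

Section VanishingSums.
Variable w : algC.
Hypothesis hw : (p * q)%N.-primitive_root w.
Variables (I : finType) (D : I -> Z).
Hypothesis sumD0 : \sum_x expw w (D x) = 0.

Lemma vanishing_sum_unit t :
  coprime t (p * q) -> \sum_x expw w ((t%:R : Z) * D x) = 0.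
Proof.
move=> cop_t.
rewrite -[RHS](@galois_vanishing_sum _ _ hw _ (fun x => nat_of_ord (D x)) sumD0 _ cop_t).
by apply: eq_bigr => x _; rewrite expw_mulnat // /expw exprAC.
Qed.

Lemma valcount_fourier (a : Z) :
  (valcount D a)%:R * (p * q)%:R = \sum_(t : Z) \sum_x expw w (t * (D x - a)).
Proof.
rewrite exchange_big /= (eq_bigr (fun x => (D x == a)%:R * (p * q)%:R)); last first.
  by move=> x _; rewrite expw_orthogonality // subr_eq0; case: eqP; rewrite ?mul1r ?mul0r.
rewrite -mulr_suml -natr_sum /valcount -sum1_card big_mkcond /=.
by congr (_%:R * _); apply: eq_bigr => x _; rewrite inE; case: eqP.
Qed.

Lemma four_term_factor (t y m u v : Z) :
  expw w (t * (y - m)) - expw w (t * (y - (m + u))) - expw w (t * (y - (m + v)))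
    + expw w (t * (y - (m + u + v)))
  = expw w (t * y) * (expw w (- (t * m)) *
      ((1 - expw w (- (t * u))) * (1 - expw w (- (t * v))))).
Proof.
have -> : t * (y - m) = t * y + - (t * m) by ring.
have -> : t * (y - (m + u)) = t * y + - (t * m) + - (t * u) by ring.
have -> : t * (y - (m + v)) = t * y + - (t * m) + - (t * v) by ring.
have -> : t * (y - (m + u + v)) = t * y + - (t * m) + - (t * u) + - (t * v) by ring.
by rewrite !expw_add //; ring.
Qed.

(* The mixed second difference of valcount D along A_p x A_q vanishes: in the
   Fourier expansion, frequencies t prime to pq contribute 0 by Galois
   invariance, and the others are killed by u \in A_p or by v \in A_q. *)
Lemma valcount_mixed (m u v : Z) : u \in Ap -> v \in Aq ->
  (valcount D m + valcount D (m + u + v)%R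
    = valcount D (m + u)%R + valcount D (m + v)%R)%N.
Proof.
move=> u_ann v_ann.
have pq_neq0 : (p * q)%:R != 0 :> algC by rewrite pnatr_eq0 -lt0n ltnW.
suff : ((valcount D m)%:R - (valcount D (m + u))%:R - (valcount D (m + v))%:R
          + (valcount D (m + u + v))%:R) * (p * q)%:R = 0 :> algC.
  move/eqP; rewrite mulf_eq0 (negPf pq_neq0) orbF => /eqP diff0.
  apply/eqP; rewrite -(@eqr_nat algC) !natrD -subr_eq0; apply/eqP.
  by rewrite -diff0; ring.
rewrite !mulrDl !mulNr !valcount_fourier -!sumrB -big_split /=.
apply: big1 => t _; rewrite -!sumrB -big_split /=.
under eq_bigr do rewrite four_term_factor.
rewrite -mulr_suml.
have t_nat : t = (nat_of_ord t)%:R by rewrite natr_Zp.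
have [cop_t|] := boolP (coprime t (p * q)).
  by rewrite [in X in X * _]t_nat vanishing_sum_unit // mul0r.
rewrite coprimeMr ![coprime (nat_of_ord t) _]coprime_sym !prime_coprime //.
rewrite negb_and !negbK => /orP [] /dvdnP [k t_eq].
  have -> : t * u = 0.
    by move: u_ann; rewrite inE t_nat t_eq natrM -mulrA => /eqP ->; rewrite mulr0.
  by rewrite oppr0 expw0 subrr !(mul0r, mulr0).
have -> : t * v = 0.
  by move: v_ann; rewrite inE t_nat t_eq natrM -mulrA => /eqP ->; rewrite mulr0.
by rewrite oppr0 expw0 subrr !(mul0r, mulr0).
Qed.

Hypothesis card_I : #|I| = (p + q)%N.

Lemma valcount_total : (\sum_(m : Z) valcount D m = p + q)%N.
Proof.
rewrite -card_I -sum1_card (eq_bigr (fun m => \sum_x (D x == m : nat))); last first.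
  move=> m _; rewrite /valcount -sum1_card big_mkcond /=.
  by apply: eq_bigr => x _; rewrite inE; case: eqP.
rewrite exchange_big /=; apply: eq_bigr => x _.
by rewrite (bigD1 (D x)) //= eqxx big1 ?addn0 // => m /negPf; rewrite eq_sym => ->.
Qed.

(* Since p + q < pq, some value of Z/pqZ is never taken by D. *)
Lemma valcount_has_zero : exists m0, valcount D m0 = 0%N.
Proof.
have [m0 /eqP|all_pos] := pickP (fun m => valcount D m == 0%N); first by exists m0.
have : (#|{: Z}| <= p + q)%N.
  rewrite -valcount_total -sum1_card; apply: leq_sum => m _.
  by have := all_pos m; rewrite lt0n => /negbT.
rewrite card_Z.
have : (2 < p)%N || (2 < q)%N by move/eqP: neq_pq p_gt1 q_gt1; lia.
by case/orP; nia.
Qed.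

(* From an unattained value m0, valcount D (m0 + u + v) splits as
   h(u) + g(v) over A_p x A_q; counting gives q * sum h + p * sum g = p + q,
   so h and g are indicators of single points u1, v1, and r = m0 + u1 + v1. *)
Theorem vanishing_sum_profile : exists r, coset_profile D r.
Proof.
have [m0 count_m0] := valcount_has_zero.
have split_uv u v : u \in Ap -> v \in Aq ->
    valcount D (m0 + (u + v)) = (valcount D (m0 + u)%R + valcount D (m0 + v)%R)%N.
  by move=> hu hv; have := valcount_mixed m0 hu hv; rewrite count_m0 add0n addrA.
pose h := (\sum_(u in Ap) valcount D (m0 + u)%R)%N.
pose g := (\sum_(v in Aq) valcount D (m0 + v)%R)%N.
have count_eq : (q * h + p * g = p + q)%N.
  rewrite -valcount_total (reindex_inj (addrI m0)) /=.
  rewrite (@sum_over_ann p q _ p_gt1 q_gt1 cop_pq (erefl _)).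
  rewrite (eq_bigr (fun u => q * valcount D (m0 + u)%R + g)%N); last first.
    move=> u hu.
    rewrite (eq_bigr (fun v => valcount D (m0 + u)%R + valcount D (m0 + v)%R)%N).
      by rewrite big_split /= sum_nat_const card_Aq mulnC.
    by move=> v hv; rewrite split_uv.
  by rewrite big_split /= sum_nat_const card_Ap -big_distrr /= mulnC.
have [h1 g1] := coprime_combination_eq p_gt1 q_gt1 cop_pq count_eq.
have [u1 hu1 [cu1 cu0]] := sum_nat_eq1 h1.
have [v1 hv1 [cv1 cv0]] := sum_nat_eq1 g1.
exists (m0 + u1 + v1) => m.
have [u [v [hu hv em]]] := Ap_Aq_decomp (m - m0).
have -> : m = m0 + (u + v) by rewrite -em addrC subrK.
have -> : m0 + (u + v) - (m0 + u1 + v1) = (u - u1) + (v - v1) by ring.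
have in_Aq : ((u - u1) + (v - v1) \in Aq) = (u == u1).
  apply/idP/eqP => [uv_q|->]; last by rewrite subrr add0r annB.
  have : u - u1 \in Aq by rewrite -(addrK (v - v1) (u - u1)) annB // annB.
  by move/(Ap_Aq_cap (annB hu hu1))/eqP; rewrite subr_eq0 => /eqP.
have in_Ap : ((u - u1) + (v - v1) \in Ap) = (v == v1).
  apply/idP/eqP => [uv_p|->]; last by rewrite subrr addr0 annB.
  have : v - v1 \in Ap by rewrite -(addKr (u - u1) (v - v1)) annD // annN // annB.
  by move/Ap_Aq_cap => /(_ (annB hv hv1))/eqP; rewrite subr_eq0 => /eqP.
rewrite split_uv // in_Ap in_Aq addnC.
congr (_ + _)%N.
  by case: (eqVneq v v1) => [->|ne] /=; [rewrite cv1 | apply: cv0].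
by case: (eqVneq u u1) => [->|ne] /=; [rewrite cu1 | apply: cu0].
Qed.

End VanishingSums.

Section Partition.

Lemma mem_coset_q (r x : Z) : (x \in coset_of_mul q r) = (x - r \in Ap).
Proof. by rewrite mem_translate (mulsub_ann p_gt1 q_gt1 cop_pq). Qed.

Lemma mem_coset_p (r x : Z) : (x \in coset_of_mul p r) = (x - r \in Aq).
Proof. by rewrite mem_translate (mulsub_ann q_gt1 p_gt1 cop_qp qp_eq). Qed.

Lemma card_coset_q (r : Z) : #|coset_of_mul q r :\ r| = p.-1.
Proof.
have := cardsD1 r (coset_of_mul q r).
rewrite mem_coset_q subrr ann0 card_translate (mulsub_ann p_gt1 q_gt1 cop_pq) //.
by rewrite card_Ap => card_eq; rewrite [in RHS]card_eq.
Qed.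

Lemma card_coset_p (r : Z) : #|coset_of_mul p r :\ r| = q.-1.
Proof.
have := cardsD1 r (coset_of_mul p r).
rewrite mem_coset_p subrr ann0 card_translate (mulsub_ann q_gt1 p_gt1 cop_qp qp_eq).
by rewrite card_Aq => card_eq; rewrite [in RHS]card_eq.
Qed.

Variables (M : 'M[Z]_(p + q)) (i j : 'I_(p + q)).
Variables (P Q R : {set 'I_(p + q)}) (r : Z).
Hypothesis partPQR : PQR_partition M i j P Q R r.

Let L := Lij M i j.

Lemma partition_P x : x \in P -> (L x - r \in Ap) && (L x != r).
Proof.
case: partPQR => _ _ [_ img] _ xP.
have : L x \in coset_of_mul q r :\ r by rewrite -img; apply: imset_f.
by rewrite in_setD1 mem_coset_q andbC.
Qed.

Lemma partition_Q x : x \in Q -> (L x - r \in Aq) && (L x != r).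
Proof.
case: partPQR => _ _ _ [_ img] xQ.
have : L x \in coset_of_mul p r :\ r by rewrite -img; apply: imset_f.
by rewrite in_setD1 mem_coset_p andbC.
Qed.

Lemma partition_R x : x \in R -> L x = r.
Proof. by case: partPQR => _ [_ hR] _ _ /hR. Qed.

Lemma partition_profile : coset_profile L r.
Proof.
case: partPQR => [[dPQ dPR dQR cover] [cardR onR] [cardP imgP] [cardQ imgQ]] m.
have injP : {in P &, injective L}.
  by apply/imset_injP; rewrite imgP card_coset_q cardP.
have injQ : {in Q &, injective L}.
  by apply/imset_injP; rewrite imgQ card_coset_p cardQ.
have fiberR : #|[set x | L x == m] :&: R| = ((m == r) * 2)%N.
  have [->|m_neq] := eqVneq m r.
    rewrite mul1n -cardR; congr #|pred_of_set _|.
    by apply/setIidPr/subsetP => x /onR /eqP; rewrite inE.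
  rewrite mul0n; apply/eqP; rewrite cards_eq0; apply/eqP/setP => x; rewrite !inE.
  by apply/andP => -[/eqP Lx /onR Lr]; move: m_neq; rewrite -Lx /L Lr eqxx.
rewrite /valcount (card_split3 _ dPQ dPR dQR cover) fiberR !card_fiber_inj //.
rewrite imgP imgQ !in_setD1 mem_coset_q mem_coset_p.
by case: eqVneq => [->|_]; rewrite ?subrr ?ann0 ?addn0.
Qed.

End Partition.

Section OddSums.
Hypothesis odd_p : odd p.

(* For p odd, the elements of A_p sum to 0: the sum S satisfies S = - S (pair
   u with - u) and p S = 0, and 2 is invertible modulo p. *)
Lemma sum_Ap : \sum_(u in Ap) u = 0 :> Z.
Proof.
set S := \sum_(u in Ap) u.
have S_opp : S = - S.
  rewrite {1}/S (reindex_inj oppr_inj) /= sumrN /S.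
  by congr (- _); apply: eq_bigl => u; rewrite !inE mulrN oppr_eq0.
have pS : p%:R * S = 0 by rewrite mulr_sumr; apply: big1 => u; rewrite inE => /eqP.
have half : ((p.+1)./2 * 2)%N = p.+1.
  by rewrite muln2 -[RHS]odd_double_half /= odd_p.
have : (((p.+1)./2 * 2)%N%:R - p%:R) * S = S.
  by rewrite half -addn1 natrD addrAC subrr add0r mul1r.
rewrite mulrBl pS subr0 natrM -mulrA mulr2n mulrDl mul1r {2}S_opp subrr mulr0.
by move/esym.
Qed.

(* A coset profile determines sum_x q (L x - r) = q * sum A_p + q * sum A_q = 0. *)
Lemma profile_sum (I : finType) (L : I -> Z) (r : Z) :
  coset_profile L r -> \sum_x q%:R * (L x - r) = 0.
Proof.
move=> profL.
rewrite (sum_by_valcount L (fun m => q%:R * (m - r))).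
under eq_bigr do rewrite profL mulrnDr.
rewrite big_split /=.
have shift (K : {set Z}) :
    \sum_(m : Z) q%:R * (m - r) *+ ((m - r)%R \in K) = \sum_(u in K) q%:R * u.
  rewrite (reindex_inj (addrI r)) /= [RHS]big_mkcond /=; apply: eq_bigr => u _.
  by rewrite addrC addKr mulrb.
rewrite !shift -mulr_sumr sum_Ap mulr0 add0r.
by apply: big1 => v; rewrite inE => /eqP.
Qed.

Lemma profile_shift (I : finType) (L1 L2 D : I -> Z) (r1 r2 r3 : Z) :
  #|I| = (p + q)%N -> (forall x, D x = L1 x + L2 x) ->
  coset_profile L1 r1 -> coset_profile L2 r2 -> coset_profile D r3 ->
  r3 - r1 - r2 \in Aq.
Proof.
move=> card_I D_eq prof1 prof2 prof3; set e := r3 - r1 - r2.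
have : \sum_x q%:R * (D x - r3) - \sum_x q%:R * (L1 x - r1)
         - \sum_x q%:R * (L2 x - r2) = - \sum_(x : I) q%:R * e.
  by rewrite -!sumrB -sumrN; apply: eq_bigr => x _; rewrite D_eq /e; ring.
rewrite (profile_sum prof1) (profile_sum prof2) (profile_sum prof3) subrr sub0r.
move=> /esym/eqP; rewrite eqr_opp => /eqP sum_e.
have qqe : q%:R * (q%:R * e) = 0.
  move: sum_e; rewrite sumr_const card_I => sum_e.
  have -> : q%:R * (q%:R * e) = q%:R * e *+ (p + q) - p%:R * q%:R * e by ring.
  by rewrite sum_e (pq_eq0 p_gt1 q_gt1 (erefl _)) mul0r subrr.
rewrite inE; apply/eqP/Ap_Aq_cap; rewrite inE ?qqe //.
by rewrite mulrA (pq_eq0 p_gt1 q_gt1 (erefl _)) mul0r.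
Qed.

End OddSums.

Lemma profile_valcount_le2 (I : finType) (L : I -> Z) (r m : Z) :
  coset_profile L r -> (valcount L m <= 2)%N.
Proof. by move=> ->; case: (_ \in Ap); case: (_ \in Aq). Qed.

(* Let D = L1 + L2 have the coset profile of r3 and e = r3 - r1 - r2 \in A_q.
   At an index x where L1 x is in (r1 + A_p) \ {r1} and L2 x is in r2 + A_q,
   the value D x - r3 = (L1 x - r1) + (L2 x - r2 - e) must lie in A_p u A_q;
   it cannot lie in A_q, hence L2 x - r2 - e \in A_p n A_q = 0. *)
Lemma profile_mixed_value (I : finType) (L1 L2 D : I -> Z) (r1 r2 r3 : Z) (x : I) :
  D x = L1 x + L2 x -> coset_profile D r3 -> r3 - r1 - r2 \in Aq ->
  L1 x - r1 \in Ap -> L1 x != r1 -> L2 x - r2 \in Aq ->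
  L2 x = r2 + (r3 - r1 - r2).
Proof.
move=> Dx prof3 e_Aq a1_Ap a1_neq0 a2_Aq.
have y_eq : D x - r3 = (L1 x - r1) + (L2 x - r2 - (r3 - r1 - r2)) by rewrite Dx; ring.
have a2e_Aq : L2 x - r2 - (r3 - r1 - r2) \in Aq by rewrite annB.
have y_notin_Aq : (D x - r3 \in Aq) = false.
  apply/negP => y_Aq.
  have a1_Aq : L1 x - r1 \in Aq.
    have -> : L1 x - r1 = D x - r3 - (L2 x - r2 - (r3 - r1 - r2)) by rewrite y_eq; ring.
    by rewrite annB.
  by move: a1_neq0; rewrite -subr_eq0 (Ap_Aq_cap a1_Ap a1_Aq) eqxx.
have y_Ap : D x - r3 \in Ap.
  have : (0 < valcount D (D x))%N by apply/card_gt0P; exists x; rewrite inE.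
  by rewrite prof3 y_notin_Aq addn0 lt0b.
have a2e_Ap : L2 x - r2 - (r3 - r1 - r2) \in Ap.
  have -> : L2 x - r2 - (r3 - r1 - r2) = D x - r3 - (L1 x - r1) by rewrite y_eq; ring.
  by rewrite annB.
have /eqP := Ap_Aq_cap a2e_Ap a2e_Aq.
by rewrite subr_eq0 subr_eq addrC => /eqP.
Qed.

(* Orthogonality of rows i and k: the differences L_ik form a vanishing sum of
   p + q roots of unity, hence have a coset profile. *)
Lemma hadamard_profile (w : algC) (M : 'M[Z]_(p + q)) (i k : 'I_(p + q)) :
  (p * q)%N.-primitive_root w -> hadamard_exp w M -> i != k ->
  exists r, coset_profile (Lij M i k) r.
Proof.
move=> hw hM ik; apply: (vanishing_sum_profile hw _ (card_ord _)).
rewrite -[RHS](hM k i); last by rewrite eq_sym.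
by apply: eq_bigr => x _; rewrite expw_conj.
Qed.

End DistinctPrimes.

Theorem lemma6p3 (p q : nat) (pr_p : prime p) (pr_q : prime q) (neq_pq : p != q)
    (w : algC) (hw : (p * q)%N.-primitive_root w)
    (M : 'M['Z_(p * q)]_(p + q)) (hM : hadamard_exp w M)
    (i j k : 'I_(p + q)) (hij : i != j) (hjk : j != k) (hik : i != k)
    (Pij Qij Rij : {set 'I_(p + q)}) (rij : 'Z_(p * q))
    (Hij : PQR_partition M i j Pij Qij Rij rij)
    (Pjk Qjk Rjk : {set 'I_(p + q)}) (rjk : 'Z_(p * q))
    (Hjk : PQR_partition M j k Pjk Qjk Rjk rjk) :
  (#|Pij :&: (Qjk :|: Rjk)| <= 2)%N.
Proof.
have [odd_p|/(prime_oddPn pr_p) p2] := boolP (odd p); last first.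
  apply: leq_trans (subset_leq_card (subsetIl _ _)) _.
  by case: Hij => _ _ [-> _] _; rewrite p2.
have L_ik x : Lij M i k x = Lij M i j x + Lij M j k x by rewrite /Lij; ring.
have prof_ij := partition_profile pr_p pr_q neq_pq Hij.
have prof_jk := partition_profile pr_p pr_q neq_pq Hjk.
have [rik prof_ik] := hadamard_profile pr_p pr_q neq_pq hw hM hik.
have e_Aq := profile_shift pr_p pr_q neq_pq odd_p (card_ord _) L_ik prof_ij prof_jk prof_ik.
(* Every x in P_ij :&: Q+_jk has L_jk x = r_jk + e, a value taken at most twice. *)
apply: leq_trans (profile_valcount_le2 (rjk + (rik - rij - rjk)) prof_jk).
apply/subset_leq_card/subsetP => x; rewrite !inE => /andP [xP xQR].
have /andP [a1_Ap a1_neq] := partition_P pr_p pr_q neq_pq Hij xP.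
have a2_Aq : Lij M j k x - rjk \in ann (p * q) q.
  case/orP: xQR => [/(partition_Q pr_p pr_q neq_pq Hjk)/andP [] //|/(partition_R Hjk) ->].
  by rewrite subrr ann0.
by rewrite (profile_mixed_value pr_p pr_q neq_pq (L_ik x) prof_ik e_Aq a1_Ap a1_neq a2_Aq).
Qed.
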